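(* Let $X$ be a metric space. Let $\varphi\colon[0,1]^2\to X$ be bi-Lipschitz and $\rho_0,\rho_1\colon X\to\mathbb{R}$ Lipschitz, all with the common (bi-)Lipschitz constant $L$, and suppose there are constants $0<m\le M$ with $$\rho_0(x)+m\le\rho_1(x)\le\rho_0(x)+M\quad\text{for all }x\in X.$$ Define $\overline{\varphi}\colon[0,1]^3\to X\times\mathbb{R}$ by $\overline{\varphi}(x,t)=\bigl(\varphi(x),(1-t)\rho_0(\varphi(x))+t\rho_1(\varphi(x))\bigr)$ for $x\in[0,1]^2$, $t\in[0,1]$. Then $\overline{\varphi}$ is bi-Lipschitz onto its image, with a constant $\bar L$ depending only on $L,M,m$, where $X\times\mathbb{R}$ carries the maximum metric $d((x,u),(y,v))=\max\{|x-y|,|u-v|\}$. *)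

From Stdlib Require Import Reals.
Open Scope R_scope.

Definition is_metric {X : Type} (d : X -> X -> R) : Prop :=
  (forall x y, 0 <= d x y) /\
  (forall x y, d x y = 0 <-> x = y) /\
  (forall x y, d x y = d y x) /\
  (forall x y z, d x z <= d x y + d y z).

Definition dist2 (p q : R * R) : R :=
  sqrt ((fst p - fst q) ^ 2 + (snd p - snd q) ^ 2).

Definition dist3 (p q : (R * R) * R) : R :=
  sqrt ((fst (fst p) - fst (fst q)) ^ 2 + (snd (fst p) - snd (fst q)) ^ 2
        + (snd p - snd q) ^ 2).

Definition in01 (t : R) : Prop := 0 <= t <= 1.
Definition in_square (p : R * R) : Prop := in01 (fst p) /\ in01 (snd p).
Definition in_cube (p : (R * R) * R) : Prop := in_square (fst p) /\ in01 (snd p).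

Definition dist_max {X : Type} (d : X -> X -> R) (p q : X * R) : R :=
  Rmax (d (fst p) (fst q)) (Rabs (snd p - snd q)).

Definition bi_lipschitz_on {A B : Type} (dA : A -> A -> R) (dB : B -> B -> R)
  (P : A -> Prop) (f : A -> B) (L : R) : Prop :=
  forall a b, P a -> P b ->
    dA a b / L <= dB (f a) (f b) /\ dB (f a) (f b) <= L * dA a b.

Definition lipschitz {X : Type} (d : X -> X -> R) (rho : X -> R) (L : R) : Prop :=
  forall x y, Rabs (rho x - rho y) <= L * d x y.

Definition phibar {X : Type} (phi : R * R -> X) (rho0 rho1 : X -> R)
  (p : (R * R) * R) : X * R :=
  let x := fst p in let t := snd p in
  (phi x, (1 - t) * rho0 (phi x) + t * rho1 (phi x)).

(* Write D for d(phi x, phi y) and tau for |s - t|.  The vertical increment of phibar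
   is (s - t) (rho1 - rho0)(phi y) up to an error of at most L D coming from the
   Lipschitz bounds on rho0 and rho1; since rho1 - rho0 lies in [m, M], it is at
   least m tau - L D and at most M tau + L D.  Hence the max-distance of the images
   controls both D (so |x - y| <= L D) and tau, and is controlled by them. *)

From Stdlib Require Import Reals Lra Psatz.
Open Scope R_scope.

Lemma sqrt_add_sq_bounds (a b : R) : 0 <= a ->
  a <= sqrt (a ^ 2 + b ^ 2) /\ Rabs b <= sqrt (a ^ 2 + b ^ 2) /\
  sqrt (a ^ 2 + b ^ 2) <= a + Rabs b.
Proof.
  intros Ha.
  pose proof (Rabs_pos b) as Hb.
  replace (b ^ 2) with (Rabs b * Rabs b) by (rewrite <- pow2_abs; ring).
  repeat split.
  - rewrite <- (sqrt_square a) at 1 by lra. apply sqrt_le_1_alt. nra.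
  - rewrite <- (sqrt_square (Rabs b)) at 1 by lra. apply sqrt_le_1_alt. nra.
  - rewrite <- (sqrt_square (a + Rabs b)) by lra. apply sqrt_le_1_alt. nra.
Qed.

Lemma dist3_split (x y : R * R) (s t : R) :
  dist3 (x, s) (y, t) = sqrt (dist2 x y ^ 2 + (s - t) ^ 2).
Proof.
  unfold dist3, dist2; cbn [fst snd].
  rewrite pow2_sqrt; [reflexivity|].
  pose proof (pow2_ge_0 (fst x - fst y)). pose proof (pow2_ge_0 (snd x - snd y)). lra.
Qed.

Lemma interpolation_gap_bounds (a0 a1 b0 b1 s t e m M : R) :
  0 <= m -> 0 <= s <= 1 ->
  Rabs (a0 - b0) <= e -> Rabs (a1 - b1) <= e -> m <= b1 - b0 <= M ->
  Rabs ((1 - s) * a0 + s * a1 - ((1 - t) * b0 + t * b1)) <= e + M * Rabs (s - t) /\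
  m * Rabs (s - t) - e <= Rabs ((1 - s) * a0 + s * a1 - ((1 - t) * b0 + t * b1)).
Proof.
  intros Hm Hs H0 H1 Hgap.
  set (w := (1 - s) * (a0 - b0) + s * (a1 - b1)).
  assert (Hw : Rabs w <= e).
  { unfold w. eapply Rle_trans; [apply Rabs_triang|].
    rewrite !Rabs_mult, (Rabs_right s), (Rabs_right (1 - s)) by lra. nra. }
  assert (Hsplit : (1 - s) * a0 + s * a1 - ((1 - t) * b0 + t * b1)
                = (s - t) * (b1 - b0) + w) by (unfold w; ring).
  assert (Hdrift : Rabs ((s - t) * (b1 - b0)) = Rabs (s - t) * (b1 - b0)).
  { rewrite Rabs_mult, (Rabs_right (b1 - b0)) by lra. reflexivity. }
  pose proof (Rabs_pos (s - t)) as Hst.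
  rewrite Hsplit. split.
  - eapply Rle_trans; [apply Rabs_triang|]. nra.
  - replace w with (- ((s - t) * (b1 - b0)) - - ((s - t) * (b1 - b0) + w)) in Hw by ring.
    pose proof (Rabs_triang_inv (- ((s - t) * (b1 - b0))) (- ((s - t) * (b1 - b0) + w))) as Hinv.
    rewrite !Rabs_Ropp in Hinv. nra.
Qed.

Section PhibarBiLipschitz.

Variables (X : Type) (d : X -> X -> R) (phi : R * R -> X) (rho0 rho1 : X -> R).
Variables (L m M : R).
Hypotheses (HL : 0 < L) (Hm : 0 < m) (HmM : m <= M).
Hypothesis Hd : is_metric d.
Hypothesis Hphi : bi_lipschitz_on dist2 d in_square phi L.
Hypotheses (Hrho0 : lipschitz d rho0 L) (Hrho1 : lipschitz d rho1 L).
Hypothesis Hgap : forall x, rho0 x + m <= rho1 x /\ rho1 x <= rho0 x + M.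

Lemma phibar_vertical_bounds (x y : R * R) (s t : R) : in01 s ->
  let u := snd (phibar phi rho0 rho1 (x, s)) - snd (phibar phi rho0 rho1 (y, t)) in
  Rabs u <= L * d (phi x) (phi y) + M * Rabs (s - t) /\
  m * Rabs (s - t) - L * d (phi x) (phi y) <= Rabs u.
Proof.
  intros Hs u. unfold u, phibar; cbn [fst snd].
  destruct (Hgap (phi y)).
  apply interpolation_gap_bounds; auto; lra.
Qed.

(* L + (L + 1)/m comes from |x - y| <= L D and m tau <= |u| + L D; L + L L + M from
   D <= L |x - y| and |u| <= L D + M tau. *)
Lemma phibar_bi_lipschitz :
  bi_lipschitz_on dist3 (dist_max d) in_cube (phibar phi rho0 rho1)
    (L + L * L + M + (L + 1) / m).
Proof.
  intros [x s] [y t] [Hx Hs] [Hy _]; cbn [fst snd] in Hx, Hs, Hy.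
  destruct (Hphi x y Hx Hy) as [Hlo Hup].
  pose proof (phibar_vertical_bounds x y s t Hs) as Hv; cbv zeta in Hv.
  assert (Hdelta0 : 0 <= dist2 x y) by apply sqrt_pos.
  destruct (sqrt_add_sq_bounds (dist2 x y) (s - t) Hdelta0) as [Hdelta [Htau Hsum]].
  rewrite dist3_split. unfold dist_max.
  change (fst (phibar phi rho0 rho1 (x, s))) with (phi x).
  change (fst (phibar phi rho0 rho1 (y, t))) with (phi y).
  set (D := d (phi x) (phi y)) in *.
  set (u := Rabs (_ - _)) in *.
  set (v := sqrt _) in *.
  set (delta := dist2 x y) in *.
  set (tau := Rabs (s - t)) in *.
  destruct Hv as [Hu_le Hu_ge].
  assert (HD0 : 0 <= D) by apply Hd.
  assert (Hdelta_D : delta <= L * D).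
  { replace delta with (L * (delta / L)) by (field; lra). nra. }
  pose proof (Rmax_l D u) as HDm. pose proof (Rmax_r D u) as Hum.
  set (dm := Rmax D u) in *.
  assert (Hmtau : m * tau <= (L + 1) * dm) by nra.
  assert (Htau_m : tau <= (L + 1) / m * dm).
  { apply (Rmult_le_reg_l m); [lra|].
    replace (m * ((L + 1) / m * dm)) with ((L + 1) * dm) by (field; lra).
    exact Hmtau. }
  assert (HK : 0 <= (L + 1) / m) by (apply Rlt_le, Rdiv_lt_0_compat; lra).
  split.
  - apply (Rmult_le_reg_l (L + L * L + M + (L + 1) / m)); [nra|].
    replace (_ * (v / _)) with v by (field; nra).
    assert (HLD : L * D <= L * dm) by nra.
    assert (Hrest : 0 <= (L * L + M) * dm) by nra.
    lra.
  - assert (Hv0 : 0 <= v) by lra.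
    assert (HDv : D <= L * v) by nra.
    assert (HLDv : L * D <= L * L * v) by nra.
    assert (HMtau : M * tau <= M * v) by nra.
    assert (Hrest : 0 <= (L + (L + 1) / m) * v) by nra.
    apply Rmax_lub; nra.
Qed.

End PhibarBiLipschitz.

Theorem lemma4p6 :
  forall L M m : R, 0 < L -> 0 < m -> m <= M ->
  exists Lbar : R, 0 < Lbar /\
    forall (X : Type) (d : X -> X -> R) (phi : R * R -> X) (rho0 rho1 : X -> R),
      is_metric d ->
      bi_lipschitz_on dist2 d in_square phi L ->
      lipschitz d rho0 L ->
      lipschitz d rho1 L ->
      (forall x, rho0 x + m <= rho1 x /\ rho1 x <= rho0 x + M) ->
      bi_lipschitz_on dist3 (dist_max d) in_cube (phibar phi rho0 rho1) Lbar.
Proof.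
  intros L M m HL Hm HmM.
  exists (L + L * L + M + (L + 1) / m). split.
  - assert (HK : 0 < (L + 1) / m) by (apply Rdiv_lt_0_compat; lra).
    nra.
  - intros X d phi rho0 rho1 Hd Hphi Hrho0 Hrho1 Hgap.
    exact (phibar_bi_lipschitz X d phi rho0 rho1 L m M HL Hm HmM Hd Hphi Hrho0 Hrho1 Hgap).
Qed.
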